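(* Let $0=t_0<t_1<\dots<t_K$, $J_i=(t_{i-1},t_i]$, $\tau_i=t_i-t_{i-1}$, $X_i=C(J_i;\ell^1_\omega)$ with $\|a\|_{X_i}=\sup_{t\in J_i}\|a(t)\|_\omega$, $\gamma\in[0,1)$, $\hat\tau_i=\tau_i^{1-\gamma}/(1-\gamma)$. For each $i$ let $U_{J_i}(t,s)$, $t_{i-1}\le s\le t\le t_i$, be a family of bounded linear operators (the evolution operator of $\dot b=\mathcal Lb+\mathcal QD\mathcal N(\bar a^{J_i}(t))b$) and suppose there are positive constants with, for all $\phi,\psi\in\ell^1_\omega$: $\|U_{J_i}(t,s)\phi\|_\omega\le W^{S}_i\|\phi\|_\omega$ and $(t-s)^\gamma\|U_{J_i}(t,s)\mathcal Q\psi\|_\omega\le W^{S}_{q,i}\|\psi\|_\omega$ for $t_{i-1}\le s<t\le t_i$; $\|U_{J_i}(t_i,s)\phi\|_\omega\le W^{(t_i,J_i)}\|\phi\|_\omega$ and $(t_i-s)^\gamma\|U_{J_i}(t_i,s)\mathcal Q\psi\|_\omega\le W^{(t_i,J_i)}_q\|\psi\|_\omega$ for $s\in[t_{i-1},t_i)$; $\|U_{J_i}(t_i,t_{i-1})\phi\|_\omega\le W^{(t_i,t_{i-1})}\|\phi\|_\omega$. For $0\le j\le i$ set $W^{(t_i,t_j)}=W^{(t_i,t_{i-1})}\cdots W^{(t_{j+1},t_j)}$ (with $W^{(t_i,t_i)}=1$). Let $\mathbf W_\ell,\mathbf W_X,\mathbf W_Y$ be the matrix infinity norms (maximum absolute row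 sums) of the lower triangular $K\times K$ matrices with entries, for $1\le j\le i\le K$: $(M_\ell)_{ij}=W^S_iW^{(t_{i-1},t_{j-1})}$; $(M_X)_{ii}=\hat\tau_iW^S_{q,i}$ and $(M_X)_{ij}=\hat\tau_jW^S_iW^{(t_{i-1},t_j)}W_q^{(t_j,J_j)}$ for $j<i$; $(M_Y)_{ii}=\tau_iW^S_i$ and $(M_Y)_{ij}=\tau_jW^S_iW^{(t_{i-1},t_j)}W^{(t_j,J_j)}$ for $j<i$. Given $\phi^{J_i}\in\ell^1_\omega$ and $\psi^{J_i},p^{J_i}\in X_i$ ($i=1,\dots,K$), define recursively, with $h^{J_0}(t_0):=0$, $h^{J_i}(t)=U_{J_i}(t,t_{i-1})\big(\phi^{J_i}+h^{J_{i-1}}(t_{i-1})\big)+\int_{t_{i-1}}^tU_{J_i}(t,s)\big(\mathcal Q\psi^{J_i}(s)+p^{J_i}(s)\big)ds$, $t\in J_i$. Then $\max_i\|h^{J_i}\|_{X_i}\le\mathbf W_\ell\max_i\|\phi^{J_i}\|_\omega+\mathbf W_X\max_i\|\psi^{J_i}\|_{X_i}+\mathbf W_Y\max_i\|p^{J_i}\|_{X_i}$.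
   Context: Standing setting. Fix $d\ge1$ and $L_1,\dots,L_d>0$. Multi-indices are $\mathbf k=(k_1,\dots,k_d)\in\mathbb Z_{\ge0}^d$. Let $\alpha_{\mathbf k}=2^{\delta_{k_1,0}}\cdots2^{\delta_{k_d,0}}$, fix $\nu_F\ge1$, and set $\omega_{\mathbf k}=\alpha_{\mathbf k}\nu_F^{k_1+\cdots+k_d}$. $\ell^1_\omega$ is the Banach space of real sequences $a=(a_{\mathbf k})_{\mathbf k\ge0}$ with $\|a\|_\omega=\sum_{\mathbf k\ge0}|a_{\mathbf k}|\omega_{\mathbf k}<\infty$. Let $(\mathbf{kL})=((k_1L_1)^2+\cdots+(k_dL_d)^2)^{1/2}$. For given real $\lambda_0,\lambda_1,\lambda_2$ let $\mu_{\mathbf k}=\lambda_0-\lambda_1(\mathbf{kL})^2+\lambda_2(\mathbf{kL})^4$ and let $\mathcal L$ be the diagonal operator $(\mathcal L\phi)_{\mathbf k}=\mu_{\mathbf k}\phi_{\mathbf k}$. Fix $q\in\{0,2\}$ and let $(\mathcal Q\phi)_{\mathbf k}=\mathrm i^q(\mathbf{kL})^q\phi_{\mathbf k}$. $\mathcal N:\ell^1_\omega\to\ell^1_\omega$ is Fréchet differentiable with $\mathcal N(0)=0$, $D\mathcal N(0)=0$. For each $i$, $\bar a^{J_i}\in X_i$ is a given approximate solution on $J_i$. The evolution operators satisfy $U_{J_i}(s,s)=I$ and $U_{J_i}(t,r)U_{J_i}(r,s)=U_{J_i}(t,s)$. *)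

From HB Require Import structures.
From mathcomp Require Import all_boot all_order all_algebra.
From mathcomp Require Import all_classical all_reals all_analysis.
Set Implicit Arguments. Unset Strict Implicit. Unset Printing Implicit Defensive.
Import Order.TTheory GRing.Theory Num.Theory.
Import numFieldNormedType.Exports.
Local Open Scope classical_set_scope.
Local Open Scope ring_scope.

Definition mindex (d : nat) := {ffun 'I_d -> nat}.
Definition seqd (R : realType) (d : nat) := mindex d -> R.

Definition alpha (R : realType) (d : nat) (k : mindex d) : R :=
  \prod_(j < d) (2 : R) ^+ (k j == 0%N).
Definition omega (R : realType) (d : nat) (nuF : R) (k : mindex d) : R :=
  alpha R k * nuF ^+ (\sum_(j < d) k j)%N.
(* ||a||_omega = sum_k |a_k| omega_k  (extended-real valued; a is in l^1_omega
   iff this is < +oo) *)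
Definition wnorm (R : realType) (d : nat) (nuF : R) (a : seqd R d) : \bar R :=
  \esum_(k in [set: mindex d]) (`|a k| * omega nuF k)%:E.
Definition kL2 (R : realType) (d : nat) (L : 'I_d -> R) (k : mindex d) : R :=
  \sum_(j < d) ((k j)%:R * L j) ^+ 2.
(* (Q phi)_k = i^q (kL)^q phi_k, q in {0,2}: i^q = (-1)^(q/2), (kL)^q = ((kL)^2)^(q/2) *)
Definition Qop (R : realType) (d : nat) (L : 'I_d -> R) (q : nat)
  (phi : seqd R d) : seqd R d :=
  fun k => (-1) ^+ (q./2) * kL2 L k ^+ (q./2) * phi k.

Definition J (R : realType) (t : nat -> R) (i : nat) : set R :=
  [set s | t i.-1 < s <= t i].
Definition tau (R : realType) (t : nat -> R) (i : nat) : R := t i - t i.-1.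
Definition tauhat (R : realType) (t : nat -> R) (gamma : R) (i : nat) : R :=
  tau t i `^ (1 - gamma) / (1 - gamma).

Definition Xnorm (R : realType) (d : nat) (nuF : R) (D : set R)
  (f : R -> seqd R d) : \bar R :=
  ereal_sup [set wnorm nuF (f s) | s in D].

Definition Xmem (R : realType) (d : nat) (nuF : R) (D : set R)
  (f : R -> seqd R d) : Prop :=
  [/\ (forall s, D s -> (wnorm nuF (f s) < +oo)%E),
      (forall s, D s -> forall e : R, 0 < e -> exists2 del : R, 0 < del &
          forall s', D s' -> `|s' - s| < del ->
            (wnorm nuF (fun k => (f s' k - f s k)%R) < e%:E)%E)
    & (Xnorm nuF D f < +oo)%E].

Definition Wp (R : realType) (Wtt : nat -> R) (i j : nat) : R :=
  \prod_(j.+1 <= m < i.+1) Wtt m.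

(* lower triangular matrices (1-based indices, 1 <= j <= i <= K) *)
Definition Ml (R : realType) (WS Wtt : nat -> R) (i j : nat) : R :=
  if (j <= i)%N then WS i * Wp Wtt i.-1 j.-1 else 0.
Definition MX (R : realType) (t : nat -> R) (gamma : R)
  (WS WSq Wtt WqtJ : nat -> R) (i j : nat) : R :=
  if j == i then tauhat t gamma i * WSq i
  else if (j < i)%N then tauhat t gamma j * WS i * Wp Wtt i.-1 j * WqtJ j
  else 0.
Definition MY (R : realType) (t : nat -> R)
  (WS Wtt WtJ : nat -> R) (i j : nat) : R :=
  if j == i then tau t i * WS i
  else if (j < i)%N then tau t j * WS i * Wp Wtt i.-1 j * WtJ j
  else 0.

Definition infnorm (R : realType) (K : nat) (M : nat -> nat -> R) : R :=
  \big[Num.max/0]_(1 <= i < K.+1) \sum_(1 <= j < K.+1) `|M i j|.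

(* the recursively defined h^{J_i}; the l^1_omega-valued integral is taken
   coordinatewise (Lebesgue integral of each coordinate) *)
Fixpoint hfun (R : realType) (d : nat) (L : 'I_d -> R) (q : nat)
  (t : nat -> R) (U : nat -> R -> R -> seqd R d -> seqd R d)
  (phi : nat -> seqd R d) (psi p : nat -> R -> seqd R d) (i : nat)
  : R -> seqd R d :=
  match i with
  | 0%N => fun _ _ => 0
  | i'.+1 => fun tt k =>
      U i tt (t i') (fun k' => phi i k' + hfun L q t U phi psi p i' (t i') k') k
      + \int[@lebesgue_measure R]_(s in [set s | t i' <= s <= tt])
          U i tt s (fun k' => Qop L q (psi i s) k' + p i s k') k
  end.

From HB Require Import structures.
From mathcomp Require Import all_boot all_order all_algebra.
From mathcomp Require Import all_classical all_reals all_analysis.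
From mathcomp Require Import measurable_realfun ring lra.
Set Implicit Arguments. Unset Strict Implicit. Unset Printing Implicit Defensive.
Import Order.TTheory GRing.Theory Num.Theory.
Import numFieldNormedType.Exports.
Local Open Scope classical_set_scope.
Local Open Scope ring_scope.

(* On J_i the variation-of-constants formula and the bounds on U_{J_i} give
     ||h^{J_i}(t)|| <= W^S_i (||phi^{J_i}|| + ||h^{J_{i-1}}(t_{i-1})||)
       + W^S_{q,i} Psi \int_{t_{i-1}}^t (t - s)^{-gamma} ds + W^S_i P (t - t_{i-1}),
   where Phi, Psi, P are the maxima of the data norms; at t = t_i the same holds
   with the endpoint constants. The singular integral is at most tauhat_i, and
   unrolling the recursion for the endpoint values turns the bound on J_i into
   the i-th row sums of M_l, M_X, M_Y, each at most the matrix infinity norm. *)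

Lemma abse_fine_le (R : realType) (x : \bar R) : (`|fine x|%:E <= `|x|)%E.
Proof. by case: x => [r||] //=; rewrite normr0 leey. Qed.

Section weighted_norm.
Variables (R : realType) (d : nat) (nuF : R).
Hypothesis nuF_ge1 : 1 <= nuF.

Lemma omega_ge0 (k : mindex d) : 0 <= omega nuF k.
Proof.
rewrite /omega mulr_ge0 ?exprn_ge0 ?(le_trans _ nuF_ge1) //.
by rewrite /alpha prodr_ge0 // => j _; rewrite exprn_ge0.
Qed.

Lemma wnorm_ge0 (x : seqd R d) : (0 <= wnorm nuF x)%E.
Proof. by apply: esum_ge0 => k _; rewrite lee_fin mulr_ge0 ?omega_ge0. Qed.

Lemma wnorm0 : wnorm nuF (fun _ : mindex d => 0 : R) = 0%E.
Proof. by apply: esum1 => k _; rewrite normr0 mul0r. Qed.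

Lemma wnormD (x y : seqd R d) :
  (wnorm nuF (fun k => (x k + y k)%R) <= wnorm nuF x + wnorm nuF y)%E.
Proof.
rewrite /wnorm -esumD => [|k _|k _]; last 2 first.
- by rewrite lee_fin mulr_ge0 ?omega_ge0.
- by rewrite lee_fin mulr_ge0 ?omega_ge0.
apply: le_esum => k _; rewrite -EFinD lee_fin -mulrDl.
by rewrite ler_wpM2r ?omega_ge0 ?ler_normD.
Qed.

(* The esum is a supremum of finite sums, and a finite sum of integrals is the
   integral of the sum. *)
Lemma wnorm_integral_le (a b : R) (F : R -> seqd R d) (g : R -> R) :
  (forall k, measurable_fun `[a, b] (fun s => F s k)) ->
  measurable_fun `]a, b[ g ->
  (forall s, a < s < b -> (wnorm nuF (F s) <= (g s)%:E)%E) ->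
  (wnorm nuF (fun k => (\int[lebesgue_measure]_(s in `[a, b]) F s k)%R)
     <= \int[lebesgue_measure]_(s in `]a, b[) (g s)%:E)%E.
Proof.
move=> mF mg Fg.
have mterm (D : set R) k : measurable D -> measurable_fun D (fun s => F s k) ->
    measurable_fun D (fun s => (`|F s k| * omega nuF k)%:E).
  by move=> mD mFk; apply/measurable_EFinP/measurable_funM => //; exact: measurableT_comp.
have msum (A : seq (mindex d)) : measurable_fun `]a, b[
    (fun s => \sum_(k <- A) (`|F s k| * omega nuF k)%:E)%E.
  apply: emeasurable_sum => k; apply: mterm => //.
  by apply: measurable_funS (mF k) => //; exact: subset_itv_oo_cc.
rewrite /wnorm /esum; apply: ge_ereal_sup => _ [A [finA _] <-].
rewrite fsbig_finite //=; set s := finmap.enum_fset _.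
apply: (@le_trans _ _ (\sum_(k <- s) \int[lebesgue_measure]_(x in `[a, b])
    ((`|F x k| * omega nuF k)%:E))%E).
  apply: lee_sum => k _.
  under eq_integral do rewrite EFinM.
  rewrite ge0_integralZr ?lee_fin ?omega_ge0 //; last first.
    by apply/measurable_EFinP; apply: measurableT_comp => //; exact: mF.
  rewrite EFinM lee_wpmul2r ?lee_fin ?omega_ge0 //.
  rewrite /Rintegral; apply: le_trans (abse_fine_le _) _.
  by apply: le_trans (le_abse_integral _ _ _) _ => //; apply/measurable_EFinP; exact: mF.
rewrite -ge0_integral_sum //; last first.
- by move=> k x _; rewrite lee_fin mulr_ge0 ?omega_ge0.
- by move=> k; apply: mterm.
rewrite integral_itv_bndoo //; apply: ge0_le_integral => //.
- by move=> x _; apply: sume_ge0 => k _; rewrite lee_fin mulr_ge0 ?omega_ge0.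
- exact: msum.
- exact/measurable_EFinP.
move=> x; rewrite /= in_itv /= => /Fg; apply: le_trans.
by apply: esum_ge; exists A => //; rewrite fsbig_finite.
Qed.

Lemma Xnorm_ub (D : set R) (f : R -> seqd R d) s :
  D s -> (wnorm nuF (f s) <= Xnorm nuF D f)%E.
Proof. by move=> Ds; apply: ereal_sup_ubound; exists s. Qed.

Lemma Xnorm_ge0 (D : set R) (f : R -> seqd R d) s : D s -> (0 <= Xnorm nuF D f)%E.
Proof. by move=> Ds; exact: le_trans (wnorm_ge0 _) (Xnorm_ub f Ds). Qed.

End weighted_norm.

Lemma is_derive_powR_sub (R : realType) (b r s : R) : s < b ->
  is_derive s 1 (fun x => (b - x) `^ r) (- (r * (b - s) `^ (r - 1))).
Proof.
move=> sb.
have hsub : is_derive s 1 (fun x : R => b - x) (0 - 1).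
  exact: (@is_deriveB _ _ _ (cst b) id s 1 0 1).
have hpow : is_derive (b - s) 1 ((@powR R) ^~ r) (r * (b - s) `^ (r - 1)).
  by apply: is_derive1_powR; rewrite subr_gt0.
by have := @is_derive1_comp _ _ (fun x => b - x) _ _ _ hpow hsub; rewrite sub0r mulrN1.
Qed.

Section singular_kernel.
Variables (R : realType) (b g : R).
Hypothesis g_lt1 : g < 1.

Let primitive (s : R) : R := - (b - s) `^ (1 - g) / (1 - g).

Lemma is_derive_kernel_primitive s : s < b ->
  is_derive s 1 primitive ((b - s) `^ (- g)).
Proof.
move=> sb; have g1 : 1 - g != 0 by rewrite subr_eq0 eq_sym lt_eqF.
have hd := is_deriveZ (1 - g)^-1 (is_deriveN (is_derive_powR_sub (1 - g) sb)).
have -> : primitive = (1 - g)^-1 *: - (fun x => (b - x) `^ (1 - g)).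
  by apply/funext => x; rewrite /primitive /= mulrC.
apply: is_derive_eq hd _; rewrite opprK /GRing.scale /= mulrA mulVf // mul1r.
by rewrite addrAC subrr add0r.
Qed.

Lemma integral_kernel_cc a c : a < c -> c < b ->
  (\int[@lebesgue_measure R]_(x in `[a, c]) ((b - x) `^ (- g))%:E =
   (primitive c)%:E - (primitive a)%:E)%E.
Proof.
move=> ac cb.
have cont_at (f : R -> R) (x df : R) : is_derive x 1 f df -> {for x, continuous f}.
  by case=> fx _; apply/differentiable_continuous/derivable1_diffP.
apply: continuous_FTC2 => //.
- apply: continuous_in_subspaceT => x; rewrite inE /= in_itv /= => /andP[_ xc].
  exact: cont_at (is_derive_powR_sub _ (le_lt_trans xc cb)).
- split.
  + move=> x; rewrite in_itv /= => /andP[_ xc].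
    by apply: ex_derive; exact: is_derive_kernel_primitive (lt_trans xc cb).
  + apply: cvg_at_right_filter.
    exact: cont_at (is_derive_kernel_primitive (lt_trans ac cb)).
  + by apply: cvg_at_left_filter; exact: cont_at (is_derive_kernel_primitive cb).
- move=> x; rewrite in_itv /= => /andP[_ xc].
  by rewrite derive1E; apply: derive_val; exact: is_derive_kernel_primitive (lt_trans xc cb).
Qed.

(* The kernel blows up at b: integrate over [a, c_n] with c_n increasing to b
   and pass to the limit by monotone convergence. *)
Lemma integral_kernel_oo_le a : a < b ->
  (\int[@lebesgue_measure R]_(x in `]a, b[) ((b - x) `^ (- g))%:E
     <= ((b - a) `^ (1 - g) / (1 - g))%:E)%E.
Proof.
move=> ab; have ba : 0 < b - a by rewrite subr_gt0.
have mk : measurable_fun setT (fun x : R => ((b - x) `^ (- g))%:E).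
  by apply/measurable_EFinP/(measurableT_comp (measurable_powR _)); exact: measurable_funB.
pose c (n : nat) := b - (b - a) / n.+2%:R.
have cb n : c n < b by rewrite /c ltrBlDr ltrDl divr_gt0.
have ac n : a < c n.
  by rewrite /c ltrBrDl -ltrBrDr ltr_pdivrMr // ltr_pMr // ltr1n.
have nd_c : {homo c : m n / (m <= n)%N >-> m <= n}.
  move=> m n mn; rewrite /c lerB // ler_pM2l // lef_pV2 ?posrE //.
  by rewrite ler_nat !ltnS.
have cup_c : \bigcup_n `[a, c n]%classic = `[a, b[%classic.
  apply/seteqP; split => x /=; rewrite in_itv /=.
    by move=> [n _]; rewrite /= in_itv /= => /andP[-> /le_lt_trans ->].
  move=> /andP[ax xb]; have bx : 0 < b - x by rewrite subr_gt0.
  exists (Num.truncn ((b - a) / (b - x))) => //=; rewrite in_itv /= ax /c.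
  rewrite lerBrDr -lerBrDl ler_pdivrMr // mulrC -ler_pdivrMr //.
  by apply: le_trans (ltW (truncnS_gt _)) _; rewrite ler_nat.
rewrite integral_itv_obnd_cbnd; last exact: measurable_funS mk.
rewrite -cup_c.
have cvg_int : (\int[lebesgue_measure]_(x in `[a, c n]) ((b - x) `^ (- g))%:E)%E
    @[n --> \oo] --> (\int[lebesgue_measure]_(x in \bigcup_n `[a, c n]%classic)
                       ((b - x) `^ (- g))%:E)%E.
  apply: ge0_nondecreasing_set_cvg_integral => //.
  - move=> m n mn; rewrite subsetEset; apply: subset_itvl.
    by rewrite bnd_simp nd_c.
  - by move=> n; exact: measurable_funS mk.
  - by move=> n x _; rewrite lee_fin powR_ge0.
rewrite -(cvg_lim _ cvg_int) //; apply: lime_le; first exact: cvgP cvg_int.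
apply: nearW => n; rewrite integral_kernel_cc // -EFinB lee_fin /primitive.
have : 0 <= (b - c n) `^ (1 - g) / (1 - g).
  by rewrite divr_ge0 ?powR_ge0 // subr_ge0 ltW.
rewrite !mulNr; lra.
Qed.

Lemma integral_kernel_affine_le a c1 c2 : a < b -> 0 <= c1 -> 0 <= c2 ->
  (\int[@lebesgue_measure R]_(s in `]a, b[) ((c1 * (b - s) `^ (- g) + c2)%:E)
     <= (c1 * ((b - a) `^ (1 - g) / (1 - g)) + c2 * (b - a))%:E)%E.
Proof.
move=> ab c1_ge0 c2_ge0.
have mk : measurable_fun `]a, b[ (fun s : R => (b - s) `^ (- g)).
  apply: (@measurable_funS _ _ _ _ setT) => //.
  by apply: (measurableT_comp (measurable_powR _)); exact: measurable_funB.
under eq_integral do rewrite EFinD.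
rewrite ge0_integralD //; last 2 first.
- by move=> x _; rewrite lee_fin mulr_ge0 ?powR_ge0.
- exact/measurable_EFinP/measurable_funM.
rewrite EFinD leeD //.
  under eq_integral do rewrite EFinM.
  rewrite ge0_integralZl_EFin //; last 2 first.
  - by move=> x _; rewrite lee_fin powR_ge0.
  - exact/measurable_EFinP.
  by rewrite EFinM lee_wpmul2l ?lee_fin // integral_kernel_oo_le.
rewrite integral_cst // [X in (_ * X)%E](@lebesgue_measure_itv R `]a, b[%R).
by rewrite /= lte_fin ab -EFinD -EFinM mulrC.
Qed.

End singular_kernel.

Section propagator_sums.
Variables (R : realType) (Wtt : nat -> R).

Lemma Wpnn n : Wp Wtt n n = 1.
Proof. by rewrite /Wp big_geq. Qed.

Lemma WpSl n j : (j <= n)%N -> Wp Wtt n.+1 j = Wp Wtt n j * Wtt n.+1.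
Proof. by move=> jn; rewrite /Wp big_nat_recr //= ltnS. Qed.

Definition Wp_sum (n : nat) : R := \sum_(1 <= j < n.+1) Wp Wtt n j.-1.

Definition Wp_wsum (c : nat -> R) (n : nat) : R :=
  \sum_(1 <= j < n.+1) c j * Wp Wtt n j.

Lemma Wp_sumS n : Wp_sum n.+1 = Wtt n.+1 * (1 + Wp_sum n).
Proof.
rewrite /Wp_sum big_nat_recr //= WpSl // Wpnn mul1r mulrDr mulr1 addrC.
congr (_ + _); rewrite mulr_sumr; apply: eq_big_nat => j /andP[_ jn].
by rewrite WpSl 1?mulrC // (leq_trans (leq_pred j)).
Qed.

Lemma Wp_wsumS c n : Wp_wsum c n.+1 = c n.+1 + Wtt n.+1 * Wp_wsum c n.
Proof.
rewrite /Wp_wsum big_nat_recr //= Wpnn mulr1 addrC mulr_sumr.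
by congr (_ + _); apply: eq_big_nat => j /andP[_ jn]; rewrite WpSl // mulrA mulrC.
Qed.

End propagator_sums.

Lemma sum_nat_lower_row (R : realType) (K n : nat) (f : nat -> R) : (n < K)%N ->
  (forall j, (n.+1 < j)%N -> f j = 0) ->
  \sum_(1 <= j < K.+1) f j = \sum_(1 <= j < n.+1) f j + f n.+1.
Proof.
move=> nK f0; rewrite (@big_cat_nat _ _ _ n.+2) //= big_nat_recr //=.
have -> : \sum_(n.+2 <= j < K.+1) f j = 0.
  by rewrite big_nat_cond big1 // => j /andP[/andP[/f0]].
by rewrite addr0.
Qed.

Section row_sums.
Variables (R : realType) (K n : nat) (t : nat -> R) (gamma : R).
Variables (WS WSq WtJ WqtJ Wtt : nat -> R).
Hypothesis nK : (n < K)%N.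

Lemma Ml_row_sum : \sum_(1 <= j < K.+1) Ml WS Wtt n.+1 j = WS n.+1 * (1 + Wp_sum Wtt n).
Proof.
rewrite (@sum_nat_lower_row _ K n) // => [|j jn]; last by rewrite /Ml leqNgt jn.
rewrite /Ml leqnn /= Wpnn mulr1 /Wp_sum mulrDr mulr1 addrC mulr_sumr.
by congr (_ + _); apply: eq_big_nat => j /andP[_ jn]; rewrite ltnW.
Qed.

Lemma MX_row_sum : \sum_(1 <= j < K.+1) MX t gamma WS WSq Wtt WqtJ n.+1 j =
  tauhat t gamma n.+1 * WSq n.+1
  + WS n.+1 * Wp_wsum Wtt (fun j => tauhat t gamma j * WqtJ j) n.
Proof.
rewrite (@sum_nat_lower_row _ K n) // => [|j jn]; last first.
  by rewrite /MX gtn_eqF // ltnNge ltnW.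
rewrite /MX eqxx /Wp_wsum mulr_sumr addrC.
by congr (_ + _); apply: eq_big_nat => j /andP[_ jn]; rewrite ltn_eqF // jn; ring.
Qed.

Lemma MY_row_sum : \sum_(1 <= j < K.+1) MY t WS Wtt WtJ n.+1 j =
  tau t n.+1 * WS n.+1 + WS n.+1 * Wp_wsum Wtt (fun j => tau t j * WtJ j) n.
Proof.
rewrite (@sum_nat_lower_row _ K n) // => [|j jn]; last first.
  by rewrite /MY gtn_eqF // ltnNge ltnW.
rewrite /MY eqxx /Wp_wsum mulr_sumr addrC.
by congr (_ + _); apply: eq_big_nat => j /andP[_ jn]; rewrite ltn_eqF // jn; ring.
Qed.

End row_sums.

Lemma row_sum_le_infnorm (R : realType) K (M : nat -> nat -> R) i :
  (0 < i <= K)%N -> \sum_(1 <= j < K.+1) M i j <= infnorm K M.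
Proof.
move=> /andP[i0 iK]; apply: le_trans (ler_sum _ (fun j _ => ler_norm (M i j))) _.
apply: (@le_bigmax_seq _ _ _ _ _ i (fun _ => true)
  (fun i => \sum_(1 <= j < K.+1) `|M i j|)) => //.
by rewrite mem_index_iota i0 ltnS.
Qed.

Section bigmax_nat.
Variables (R : realType) (K : nat) (F : nat -> \bar R).
Local Open Scope ereal_scope.

Lemma le_bigmax_nat i : (0 < i <= K)%N -> F i <= \big[Order.max/0]_(1 <= i < K.+1) F i.
Proof.
by move=> /andP[i0 iK]; apply: le_bigmax_seq => //; rewrite mem_index_iota i0 ltnS.
Qed.

Lemma bigmax_nat_le x : 0 <= x -> (forall i, (0 < i <= K)%N -> F i <= x) ->
  \big[Order.max/0]_(1 <= i < K.+1) F i <= x.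
Proof.
move=> x0 Fx; rewrite big_seq; apply: bigmax_le => // i.
by rewrite mem_index_iota => /andP[i0 iK]; apply: Fx; rewrite i0 -ltnS.
Qed.

Lemma bigmax_nat_fin : (forall i, (0 < i <= K)%N -> 0 <= F i) ->
  (forall i, (0 < i <= K)%N -> F i < +oo) ->
  exists2 r : R, (0 <= r)%R & \big[Order.max/0]_(1 <= i < K.+1) F i = r%:E.
Proof.
move=> F_ge0 F_fin; set B := \big[_/_]_(_ <= _ < _) _.
have /andP[B0 Boo] : 0 <= B < +oo.
  rewrite /B big_seq; apply: (big_ind (fun x => 0 <= x < +oo)).
  - by rewrite lexx ltey.
  - move=> x y /andP[x0 xoo] /andP[y0 yoo].
    by rewrite le_max x0 gt_max xoo yoo.
  - move=> i; rewrite mem_index_iota => /andP[i0 iK].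
    have iK' : (0 < i <= K)%N by rewrite i0 -ltnS.
    by rewrite F_ge0 ?F_fin.
by exists (fine B); rewrite ?fine_ge0 // fineK // ge0_fin_numE.
Qed.

End bigmax_nat.

Section variation_of_constants.
Variables (R : realType) (d : nat) (L : 'I_d -> R) (nuF : R) (q K : nat).
Variables (t : nat -> R) (gamma : R) (U : nat -> R -> R -> seqd R d -> seqd R d).
Variables (WS WSq WtJ WqtJ Wtt : nat -> R).
Variables (phi : nat -> seqd R d) (psi p : nat -> R -> seqd R d) (Phi Psi P : R).
Local Open Scope ereal_scope.

Hypothesis nuF_ge1 : (1 <= nuF)%R.
Hypothesis t_incr : forall i, (0 < i <= K)%N -> (t i.-1 < t i)%R.
Hypothesis gamma01 : (0 <= gamma < 1)%R.
Hypothesis W_gt0 : forall i, (0 < i <= K)%N ->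
  [/\ (0 < WS i)%R, (0 < WSq i)%R, (0 < WtJ i)%R, (0 < WqtJ i)%R & (0 < Wtt i)%R].
Hypothesis U_additive : forall i, (0 < i <= K)%N ->
  forall tt s, (t i.-1 <= s <= tt)%R -> (tt <= t i)%R -> forall x y : seqd R d,
  U i tt s (fun k => x k + y k)%R = (fun k => U i tt s x k + U i tt s y k)%R.
Hypothesis WS_bound : forall i, (0 < i <= K)%N ->
  forall tt s, (t i.-1 <= s)%R -> (s < tt)%R -> (tt <= t i)%R ->
  forall x, wnorm nuF (U i tt s x) <= (WS i)%:E * wnorm nuF x.
Hypothesis WSq_bound : forall i, (0 < i <= K)%N ->
  forall tt s, (t i.-1 <= s)%R -> (s < tt)%R -> (tt <= t i)%R ->
  forall x, ((tt - s) `^ gamma)%:E * wnorm nuF (U i tt s (Qop L q x))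
              <= (WSq i)%:E * wnorm nuF x.
Hypothesis WtJ_bound : forall i, (0 < i <= K)%N -> forall s, (t i.-1 <= s < t i)%R ->
  forall x, wnorm nuF (U i (t i) s x) <= (WtJ i)%:E * wnorm nuF x.
Hypothesis WqtJ_bound : forall i, (0 < i <= K)%N -> forall s, (t i.-1 <= s < t i)%R ->
  forall x, ((t i - s) `^ gamma)%:E * wnorm nuF (U i (t i) s (Qop L q x))
              <= (WqtJ i)%:E * wnorm nuF x.
Hypothesis Wtt_bound : forall i, (0 < i <= K)%N ->
  forall x, wnorm nuF (U i (t i) (t i.-1) x) <= (Wtt i)%:E * wnorm nuF x.
Hypothesis integrand_measurable : forall i, (0 < i <= K)%N -> forall tt, J t i tt ->
  forall k, measurable_fun [set s | (t i.-1 <= s <= tt)%R]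
    (fun s => U i tt s (fun k' => Qop L q (psi i s) k' + p i s k')%R k).
Hypotheses (Psi_ge0 : (0 <= Psi)%R) (P_ge0 : (0 <= P)%R).
Hypothesis phi_le : forall i, (0 < i <= K)%N -> wnorm nuF (phi i) <= Phi%:E.
Hypothesis psi_le : forall i s, (0 < i <= K)%N -> J t i s -> wnorm nuF (psi i s) <= Psi%:E.
Hypothesis p_le : forall i s, (0 < i <= K)%N -> J t i s -> wnorm nuF (p i s) <= P%:E.

Local Notation h := (hfun L q t U phi psi p).

Lemma wnorm_hfunS_le i tt (A Bq B : R) : (i < K)%N -> (t i < tt <= t i.+1)%R ->
  (0 <= Bq)%R -> (0 <= B)%R ->
  (forall x, wnorm nuF (U i.+1 tt (t i) x) <= A%:E * wnorm nuF x) ->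
  (forall s, (t i < s < tt)%R -> forall x,
     ((tt - s) `^ gamma)%:E * wnorm nuF (U i.+1 tt s (Qop L q x)) <= Bq%:E * wnorm nuF x) ->
  (forall s, (t i < s < tt)%R -> forall x,
     wnorm nuF (U i.+1 tt s x) <= B%:E * wnorm nuF x) ->
  wnorm nuF (h i.+1 tt) <=
    A%:E * wnorm nuF (fun k => phi i.+1 k + h i (t i) k)%R
    + (Bq * Psi * ((tt - t i) `^ (1 - gamma) / (1 - gamma)) + B * P * (tt - t i))%:E.
Proof.
move=> iK /andP[itt tti] Bq_ge0 B_ge0 hA hBq hB.
have i1K : (0 < i.+1 <= K)%N by rewrite iK.
have inJ s : (t i < s < tt)%R -> J t i.+1 s.
  by move=> /andP[ts st]; rewrite /J /= ts (le_trans (ltW st)).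
cbn [hfun]; apply: le_trans (wnormD _ _ _) _ => //; apply: leeD; first exact: hA.
have cc : [set s | (t i <= s <= tt)%R] = `[t i, tt]%classic.
  by apply/seteqP; split => x /=; rewrite in_itv.
have kernel_meas : measurable_fun `]t i, tt[ (fun s => (tt - s) `^ (- gamma))%R.
  apply: (@measurable_funS _ _ _ _ setT) => //.
  by apply: (measurableT_comp (measurable_powR _)); exact: measurable_funB.
rewrite cc; apply: le_trans (wnorm_integral_le nuF_ge1
  (g := fun s => Bq * Psi * (tt - s) `^ (- gamma) + B * P)%R _ _ _) _.
- have Jtt : J t i.+1 tt by rewrite /J /= itt.
  by move=> k; rewrite -cc; exact: integrand_measurable i1K tt Jtt k.
- by apply: measurable_funD => //; apply: measurable_funM.
- move=> s ss; have st : (0 < tt - s)%R by case/andP: ss => _; rewrite subr_gt0.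
  have ss' : (t i <= s <= tt)%R by case/andP: ss => /ltW -> /ltW ->.
  rewrite (U_additive i1K ss' tti); apply: le_trans (wnormD _ _ _) _ => //.
  rewrite EFinD; apply: leeD.
  + rewrite powRN mulrC EFinM lee_pdivlMl ?powR_gt0 //.
    apply: le_trans (hBq s ss (psi i.+1 s)) _.
    by rewrite EFinM lee_pmul ?wnorm_ge0 ?(psi_le i1K (inJ s ss)).
  + apply: le_trans (hB s ss (p i.+1 s)) _.
    by rewrite EFinM lee_pmul ?wnorm_ge0 ?(p_le i1K (inJ s ss)).
- apply: integral_kernel_affine_le; rewrite ?mulr_ge0 //.
  by case/andP: gamma01.
Qed.

(* Unrolls ||h^{J_n}(t_n)|| <= W^{(t_n,t_{n-1})} (Phi + ||h^{J_{n-1}}(t_{n-1})||)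
   + tauhat_n W_q^{(t_n,J_n)} Psi + tau_n W^{(t_n,J_n)} P. *)
Let endpoint_bound (n : nat) : R :=
  (Wp_sum Wtt n * Phi + Wp_wsum Wtt (fun j => tauhat t gamma j * WqtJ j) n * Psi
   + Wp_wsum Wtt (fun j => tau t j * WtJ j) n * P)%R.

Lemma wnorm_hfun_endpoint_le n : (n <= K)%N ->
  wnorm nuF (h n (t n)) <= (endpoint_bound n)%:E.
Proof.
elim: n => [_|n IH nK].
  by rewrite /= wnorm0 /endpoint_bound /Wp_sum /Wp_wsum !big_geq // !mul0r !addr0.
have n1K : (0 < n.+1 <= K)%N by rewrite nK.
have [_ _ WtJ_gt0 WqtJ_gt0 Wtt_gt0] := W_gt0 n1K.
have tn : (t n < t n.+1)%R := t_incr n1K.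
apply: le_trans (wnorm_hfunS_le nK _ (ltW WqtJ_gt0) (ltW WtJ_gt0) _ _ _) _.
- by rewrite tn lexx.
- exact: Wtt_bound n1K.
- by move=> s /andP[ns sn] x; apply: WqtJ_bound; rewrite // (ltW ns).
- by move=> s /andP[ns sn] x; apply: WtJ_bound; rewrite // (ltW ns).
have start_le : (Wtt n.+1)%:E * wnorm nuF (fun k => phi n.+1 k + h n (t n) k)%R
    <= (Wtt n.+1 * (Phi + endpoint_bound n))%:E.
  rewrite EFinM; apply: lee_pmul; rewrite ?lee_fin ?(ltW Wtt_gt0) ?wnorm_ge0 //.
  apply: le_trans (wnormD _ _ _) _ => //.
  by rewrite EFinD; apply: leeD; [exact: phi_le | exact: IH (ltnW nK)].
apply: le_trans (leeD start_le (lexx _)) _.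
rewrite -EFinD lee_fin /endpoint_bound Wp_sumS !Wp_wsumS /tauhat /tau /=.
lra.
Qed.

Lemma wnorm_hfun_le n tt : (n < K)%N -> J t n.+1 tt ->
  wnorm nuF (h n.+1 tt) <=
    ((\sum_(1 <= j < K.+1) Ml WS Wtt n.+1 j) * Phi
     + (\sum_(1 <= j < K.+1) MX t gamma WS WSq Wtt WqtJ n.+1 j) * Psi
     + (\sum_(1 <= j < K.+1) MY t WS Wtt WtJ n.+1 j) * P)%R%:E.
Proof.
move=> nK Jtt; have /andP[ntt ttn] : (t n < tt <= t n.+1)%R := Jtt.
have n1K : (0 < n.+1 <= K)%N by rewrite nK.
have [WS_gt0 WSq_gt0 _ _ _] := W_gt0 n1K.
apply: le_trans (wnorm_hfunS_le nK (A := WS n.+1) (Bq := WSq n.+1) (B := WS n.+1)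
  _ (ltW WSq_gt0) (ltW WS_gt0) _ _ _) _.
- by rewrite ntt ttn.
- by move=> x; apply: WS_bound.
- by move=> s /andP[ns st] x; apply: WSq_bound; rewrite // (ltW ns).
- by move=> s /andP[ns st] x; apply: WS_bound; rewrite // (ltW ns).
have start_le : (WS n.+1)%:E * wnorm nuF (fun k => phi n.+1 k + h n (t n) k)%R
    <= (WS n.+1 * (Phi + endpoint_bound n))%:E.
  rewrite EFinM; apply: lee_pmul; rewrite ?lee_fin ?(ltW WS_gt0) ?wnorm_ge0 //.
  apply: le_trans (wnormD _ _ _) _ => //; rewrite EFinD; apply: leeD.
    exact: phi_le.
  exact: wnorm_hfun_endpoint_le (ltnW nK).
apply: le_trans (leeD start_le (lexx _)) _.
rewrite -EFinD lee_fin Ml_row_sum // MX_row_sum // MY_row_sum //.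
have dt_ge0 : (0 <= tt - t n)%R by rewrite subr_ge0 ltW.
have dt_le : (tt - t n <= tau t n.+1)%R by rewrite lerB.
have g1 : (0 < 1 - gamma)%R by case/andP: gamma01; rewrite subr_gt0.
have pow_le : ((tt - t n) `^ (1 - gamma) <= tau t n.+1 `^ (1 - gamma))%R.
  apply: ge0_ler_powR; rewrite ?nnegrE ?(ltW g1) //.
  exact: le_trans dt_ge0 dt_le.
have kernel_le : (WSq n.+1 * Psi * ((tt - t n) `^ (1 - gamma) / (1 - gamma))
    <= WSq n.+1 * Psi * tauhat t gamma n.+1)%R.
  rewrite /tauhat ler_wpM2l ?mulr_ge0 ?(ltW WSq_gt0) //.
  by rewrite ler_wpM2r // invr_ge0 ltW.
have time_le : (WS n.+1 * P * (tt - t n) <= WS n.+1 * P * tau t n.+1)%R.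
  by rewrite ler_wpM2l // mulr_ge0 // ltW.
rewrite /endpoint_bound; lra.
Qed.

End variation_of_constants.

Theorem mainTheorem9 (R : realType) (d : nat) (L : 'I_d -> R) (nuF : R)
  (q K : nat) (t : nat -> R) (gamma : R)
  (U : nat -> R -> R -> seqd R d -> seqd R d)
  (WS WSq WtJ WqtJ Wtt : nat -> R)
  (phi : nat -> seqd R d) (psi p : nat -> R -> seqd R d) :
  (0 < d)%N -> (forall j, 0 < L j) -> 1 <= nuF ->
  (q = 0%N \/ q = 2%N) ->
  (0 < K)%N -> t 0%N = 0 -> (forall i, (0 < i <= K)%N -> t i.-1 < t i) ->
  0 <= gamma < 1 ->
  (forall i, (0 < i <= K)%N ->
     [/\ 0 < WS i, 0 < WSq i, 0 < WtJ i, 0 < WqtJ i & 0 < Wtt i]) ->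
  (forall i, (0 < i <= K)%N -> forall tt s, t i.-1 <= s <= tt -> tt <= t i ->
     (forall x y : seqd R d,
        U i tt s (fun k => x k + y k) = (fun k => U i tt s x k + U i tt s y k)) /\
     (forall (c : R) (x : seqd R d),
        U i tt s (fun k => c * x k) = (fun k => c * U i tt s x k))) ->
  (forall i, (0 < i <= K)%N -> forall s x, t i.-1 <= s <= t i ->
     (wnorm nuF x < +oo)%E -> U i s s x = x) ->
  (forall i, (0 < i <= K)%N -> forall tt r s x,
     t i.-1 <= s -> s <= r -> r <= tt -> tt <= t i ->
     (wnorm nuF x < +oo)%E -> U i tt r (U i r s x) = U i tt s x) ->
  (forall i, (0 < i <= K)%N -> forall tt s, t i.-1 <= s -> s < tt -> tt <= t i ->
     forall x, (wnorm nuF (U i tt s x) <= (WS i)%:E * wnorm nuF x)%E) ->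
  (forall i, (0 < i <= K)%N -> forall tt s, t i.-1 <= s -> s < tt -> tt <= t i ->
     forall x, (((tt - s) `^ gamma)%:E * wnorm nuF (U i tt s (Qop L q x))
                  <= (WSq i)%:E * wnorm nuF x)%E) ->
  (forall i, (0 < i <= K)%N -> forall s, t i.-1 <= s < t i ->
     forall x, (wnorm nuF (U i (t i) s x) <= (WtJ i)%:E * wnorm nuF x)%E) ->
  (forall i, (0 < i <= K)%N -> forall s, t i.-1 <= s < t i ->
     forall x, (((t i - s) `^ gamma)%:E * wnorm nuF (U i (t i) s (Qop L q x))
                  <= (WqtJ i)%:E * wnorm nuF x)%E) ->
  (forall i, (0 < i <= K)%N ->
     forall x, (wnorm nuF (U i (t i) (t i.-1) x) <= (Wtt i)%:E * wnorm nuF x)%E) ->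
  (forall i, (0 < i <= K)%N -> (wnorm nuF (phi i) < +oo)%E) ->
  (forall i, (0 < i <= K)%N -> Xmem nuF (J t i) (psi i) /\ Xmem nuF (J t i) (p i)) ->
  (forall i, (0 < i <= K)%N -> forall tt, J t i tt -> forall k,
     measurable_fun [set s | t i.-1 <= s <= tt]
       (fun s => U i tt s (fun k' => Qop L q (psi i s) k' + p i s k') k)) ->
  (\big[Order.max/0%E]_(1 <= i < K.+1)
      Xnorm nuF (J t i) (hfun L q t U phi psi p i)
   <= (infnorm K (Ml WS Wtt))%:E
        * \big[Order.max/0%E]_(1 <= i < K.+1) wnorm nuF (phi i)
      + (infnorm K (MX t gamma WS WSq Wtt WqtJ))%:E
        * \big[Order.max/0%E]_(1 <= i < K.+1) Xnorm nuF (J t i) (psi i)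
      + (infnorm K (MY t WS Wtt WtJ))%:E
        * \big[Order.max/0%E]_(1 <= i < K.+1) Xnorm nuF (J t i) (p i))%E.
Proof.
move=> _ _ nuF_ge1 _ _ _ t_incr gamma01 W_gt0 U_lin _ _ WS_bound WSq_bound
  WtJ_bound WqtJ_bound Wtt_bound phi_fin XY measurable_integrand.
have Jt i : (0 < i <= K)%N -> J t i (t i) by move=> iK; rewrite /J /= t_incr //=.
have X_ge0 (f : R -> seqd R d) i : (0 < i <= K)%N -> (0 <= Xnorm nuF (J t i) f)%E.
  by move=> iK; have := Xnorm_ge0 nuF_ge1 f (Jt i iK).
have [Phi Phi_ge0 ePhi] := bigmax_nat_fin (fun i _ => wnorm_ge0 nuF_ge1 (phi i)) phi_fin.
have [Psi Psi_ge0 ePsi] := bigmax_nat_fin (fun i => @X_ge0 (psi i) i)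
  (fun i iK => let: And3 _ _ fin := (XY i iK).1 in fin).
have [P P_ge0 eP] := bigmax_nat_fin (fun i => @X_ge0 (p i) i)
  (fun i iK => let: And3 _ _ fin := (XY i iK).2 in fin).
rewrite ePhi ePsi eP -!EFinM -!EFinD.
have infnorm_ge0 (M : nat -> nat -> R) : 0 <= infnorm K M by exact: bigmax_ge_id.
apply: bigmax_nat_le => [|i /andP[i0 iK]]; first by rewrite lee_fin !addr_ge0 // mulr_ge0.
apply: ge_ereal_sup => _ [s Js <-]; case: i i0 iK Js => // n _ nK Js.
have phi_le j : (0 < j <= K)%N -> (wnorm nuF (phi j) <= Phi%:E)%E.
  by move=> jK; rewrite -ePhi; exact: le_bigmax_nat.
have psi_le j r : (0 < j <= K)%N -> J t j r -> (wnorm nuF (psi j r) <= Psi%:E)%E.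
  by move=> jK Jr; rewrite -ePsi (le_trans (Xnorm_ub nuF (psi j) Jr)) // le_bigmax_nat.
have p_le j r : (0 < j <= K)%N -> J t j r -> (wnorm nuF (p j r) <= P%:E)%E.
  by move=> jK Jr; rewrite -eP (le_trans (Xnorm_ub nuF (p j) Jr)) // le_bigmax_nat.
apply: le_trans (wnorm_hfun_le nuF_ge1 t_incr gamma01 W_gt0
  (fun j jK tt r jr rt => (U_lin j jK tt r jr rt).1) WS_bound WSq_bound WtJ_bound
  WqtJ_bound Wtt_bound measurable_integrand Psi_ge0 P_ge0 phi_le psi_le p_le nK Js) _.
have n1K : (0 < n.+1 <= K)%N by rewrite nK.
by rewrite lee_fin !lerD // ler_wpM2r // row_sum_le_infnorm.
Qed.
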